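(* Let $\mathcal D$ be a preduoidal category with monoidal structures $(\circ,\bot)$ and $(\bullet,1)$, and let $T$ be a separately opmonoidal monad on $\mathcal D$. Equip $\mathcal D^T$ with the two lifted monoidal structures $(\mathcal D^T,\circ,(\bot,T^\circ_0))$ and $(\mathcal D^T,\bullet,(1,T^\bullet_0))$. Then R-matrices $(R,\nu,\varpi,\iota)$ on $T$ are in bijective correspondence with duoidal structures $(\xi,\nu,\varpi,\iota)$ on $\mathcal D^T$ (with respect to these two lifted monoidal structures), the structure morphisms $\nu,\varpi,\iota$ being the same on both sides. Explicitly, an R-matrix $R$ yields the interchange law $$\xi_{(a,\alpha),(b,\beta),(c,\gamma),(d,\delta)} := ((\alpha\circ\gamma)\bullet(\beta\circ\delta))\cdot R_{a,b,c,d}\colon (a\bullet b)\circ(c\bullet d)\to(a\circ c)\bullet(b\circ d)$$ for all $T$-algebras $(a,\alpha),(b,\beta),(c,\gamma),(d,\delta)$; conversely an interchange law $\xi$ on $\mathcal D^T$ yields $$R_{a,b,c,d} := \xi_{Ta,Tb,Tc,Td}\cdot\big((\eta_a\bullet\eta_b)\circ(\eta_c\bullet\eta_d)\big)\colon (a\bullet b)\circ(c\bullet d)\to (Ta\circ Tc)\bullet(Tb\circ Td)$$ for all objects $a,b,c,d$ of $\mathcal D$ (where $Ta$ denotes the free algebra $(Ta,\mu_a)$). These two constructions are mutually inverse.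
   Context: Composition of morphisms is written $g\cdot f$ ($f$ first), to avoid clash with the tensor product $\circ$. A preduoidal category is a category $\mathcal D$ with two monoidal structures $(\circ,\bot)$ and $(\bullet,1)$ (associators $\alpha$, left/right unitors $\lambda^\circ,\rho^\circ$ for $\circ$ and $\lambda^\bullet,\rho^\bullet$ for $\bullet$). A bimonad on a monoidal category $(\mathcal C,\otimes,I)$ is a monad $(B,\mu,\eta)$ with an opmonoidal structure $B_2\colon B(x\otimes y)\to Bx\otimes By$, $B_0\colon BI\to I$ such that $\mu,\eta$ are opmonoidal natural transformations. A separately opmonoidal monad on $\mathcal D$ is a monad $(T,\mu,\eta)$ together with a bimonad structure $(T^\circ_2,T^\circ_0)$ on $(\mathcal D,\circ,\bot)$ and a bimonad structure $(T^\bullet_2,T^\bullet_0)$ on $(\mathcal D,\bullet,1)$. Then the Eilenberg–Moore category $\mathcal D^T$ of $T$-algebras has lifted monoidal structures: $(a,\alpha)\circ(b,\beta)=(a\circ b,(\alpha\circ\beta)\cdot T^\circ_{2,a,b})$ with unit $(\bot,T^\circ_0)$, and $(a,\alpha)\bullet(b,\beta)=(a\bullet b,(\alpha\bullet\beta)\cdot T^\bullet_{2,a,b})$ with unit $(1,T^\bullet_0)$; the forgetful functor is strict monoidal for both. Duoidal category: a preduoidal category with a natural transformation $\zeta_{x,y,a,b}\colon (x\bullet y)\circ(a\bullet b)\to(x\circ a)\bullet(y\circ b)$ and morphisms $\nu\colon\bot\to\bot\bullet\bot$, $\varpi\colon 1\circ 1\to 1$, $\iota\colon\bot\to 1$ such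 that $(1,\varpi,\iota)$ is a monoid in $(\mathcal D,\circ,\bot)$, $(\bot,\nu,\iota)$ is a comonoid in $(\mathcal D,\bullet,1)$, and: (A1) $(\alpha\bullet\alpha)\cdot\zeta_{x\circ a,y\circ b,c,d}\cdot(\zeta_{x,y,a,b}\circ\mathrm{id}) = \zeta_{x,y,a\circ c,b\circ d}\cdot(\mathrm{id}\circ\zeta_{a,b,c,d})\cdot\alpha$ as maps $((x\bullet y)\circ(a\bullet b))\circ(c\bullet d)\to(x\circ(a\circ c))\bullet(y\circ(b\circ d))$; (A2) $\alpha\cdot(\zeta_{x,a,y,b}\bullet\mathrm{id})\cdot\zeta_{x\bullet a,c,y\bullet b,d} = (\mathrm{id}\bullet\zeta_{a,c,b,d})\cdot\zeta_{x,a\bullet c,y,b\bullet d}\cdot(\alpha\circ\alpha)$ as maps $((x\bullet a)\bullet c)\circ((y\bullet b)\bullet d)\to(x\circ y)\bullet((a\circ b)\bullet(c\circ d))$; (U) $\zeta_{\bot,\bot,a,b}\cdot(\nu\circ\mathrm{id})=((\lambda^\circ_a)^{-1}\bullet(\lambda^\circ_b)^{-1})\cdot\lambda^\circ_{a\bullet b}$, $\zeta_{a,b,\bot,\bot}\cdot(\mathrm{id}\circ\nu)=((\rho^\circ_a)^{-1}\bullet(\rho^\circ_b)^{-1})\cdot\rho^\circ_{a\bullet b}$, $(\varpi\bullet\mathrm{id})\cdot\zeta_{1,a,1,b}=(\lambda^\bullet_{a\circ b})^{-1}\cdot(\lambda^\bullet_a\circ\lambda^\bullet_b)$, $(\mathrm{id}\bullet\varpi)\cdot\zeta_{a,1,b,1}=(\rho^\bullet_{a\circ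 b})^{-1}\cdot(\rho^\bullet_a\circ\rho^\bullet_b)$. A duoidal structure on $\mathcal D^T$ means such data $(\xi,\nu,\varpi,\iota)$ for the lifted monoidal structures, with $\xi$ a natural family of morphisms of $T$-algebras and $\nu,\varpi,\iota$ morphisms of $T$-algebras. R-matrix on a separately opmonoidal monad $T$: a natural transformation $R_{a,b,c,d}\colon (a\bullet b)\circ(c\bullet d)\to(Ta\circ Tc)\bullet(Tb\circ Td)$ ($a,b,c,d\in\mathcal D$) together with morphisms of $T$-algebras $\nu\colon(\bot,T^\circ_0)\to(\bot,T^\circ_0)\bullet(\bot,T^\circ_0)$, $\varpi\colon(1,T^\bullet_0)\circ(1,T^\bullet_0)\to(1,T^\bullet_0)$, $\iota\colon(\bot,T^\circ_0)\to(1,T^\bullet_0)$, such that $(1,\varpi,\iota)$ is a monoid in $(\mathcal D^T,\circ,\bot)$, $(\bot,\nu,\iota)$ is a comonoid in $(\mathcal D^T,\bullet,1)$, and (associators suppressed, i.e. inserted canonically): (R-unit) for all $T$-algebras $(a,\alpha),(b,\beta)$: $((T^\circ_0\circ\alpha)\bullet(T^\circ_0\circ\beta))\cdot R_{\bot,\bot,a,b}\cdot(\nu\circ\mathrm{id})=((\lambda^\circ_a)^{-1}\bullet(\lambda^\circ_b)^{-1})\cdot\lambda^\circ_{a\bullet b}$; $((\alpha\circ T^\circ_0)\bullet(\beta\circ T^\circ_0))\cdot R_{a,b,\bot,\bot}\cdot(\mathrm{id}\circ\nu)=((\rho^\circ_a)^{-1}\bullet(\rho^\circ_b)^{-1})\cdot\rho^\circ_{a\bullet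 b}$; $(\varpi\bullet\mathrm{id})\cdot((T^\bullet_0\circ T^\bullet_0)\bullet(\alpha\circ\beta))\cdot R_{1,a,1,b}=(\lambda^\bullet_{a\circ b})^{-1}\cdot(\lambda^\bullet_a\circ\lambda^\bullet_b)$; $(\mathrm{id}\bullet\varpi)\cdot((\alpha\circ\beta)\bullet(T^\bullet_0\circ T^\bullet_0))\cdot R_{a,1,b,1}=(\rho^\bullet_{a\circ b})^{-1}\cdot(\rho^\bullet_a\circ\rho^\bullet_b)$. (R-lift) for all objects $a,b,c,d$: $((\mu_a\circ\mu_c)\bullet(\mu_b\circ\mu_d))\cdot R_{Ta,Tb,Tc,Td}\cdot(T^\bullet_{2,a,b}\circ T^\bullet_{2,c,d})\cdot T^\circ_{2,a\bullet b,c\bullet d} = ((\mu_a\circ\mu_c)\bullet(\mu_b\circ\mu_d))\cdot(T^\circ_{2,Ta,Tc}\bullet T^\circ_{2,Tb,Td})\cdot T^\bullet_{2,Ta\circ Tc,Tb\circ Td}\cdot TR_{a,b,c,d}$. (R-1) for all objects $a,b,c,d,x,y$, as maps $(a\bullet b)\circ(c\bullet d)\circ(x\bullet y)\to(Ta\circ Tc\circ Tx)\bullet(Tb\circ Td\circ Ty)$: $((\mu_a\circ\mu_c\circ Tx)\bullet(\mu_b\circ\mu_d\circ Ty))\cdot((T^\circ_{2,Ta,Tc}\circ Tx)\bullet(T^\circ_{2,Tb,Td}\circ Ty))\cdot R_{Ta\circ Tc,Tb\circ Td,x,y}\cdot(R_{a,b,c,d}\circ\mathrm{id}) = ((Ta\circ\mu_c\circ\mu_x)\bullet(Tb\circ\mu_d\circ\mu_y))\cdot((Ta\circ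 T^\circ_{2,Tc,Tx})\bullet(Tb\circ T^\circ_{2,Td,Ty}))\cdot R_{a,b,Tc\circ Tx,Td\circ Ty}\cdot(\mathrm{id}\circ R_{c,d,x,y})$. (R-2) for all objects $x,a,c,y,b,d$, as maps $((x\bullet a)\bullet c)\circ((y\bullet b)\bullet d)\to(Tx\circ Ty)\bullet(Ta\circ Tb)\bullet(Tc\circ Td)$: $(((\mu_x\circ\mu_y)\bullet(\mu_a\circ\mu_b))\bullet\mathrm{id})\cdot(R_{Tx,Ta,Ty,Tb}\bullet\mathrm{id})\cdot((T^\bullet_{2,x,a}\circ T^\bullet_{2,y,b})\bullet\mathrm{id})\cdot R_{x\bullet a,c,y\bullet b,d} = (\mathrm{id}\bullet((\mu_a\circ\mu_b)\bullet(\mu_c\circ\mu_d)))\cdot(\mathrm{id}\bullet R_{Ta,Tc,Tb,Td})\cdot(\mathrm{id}\bullet(T^\bullet_{2,a,c}\circ T^\bullet_{2,b,d}))\cdot R_{x,a\bullet c,y,b\bullet d}\cdot(\alpha\circ\alpha)$. A quasitriangular structure on $T$ is an R-matrix on $T$. *)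

Set Implicit Arguments.
Unset Strict Implicit.

(* Categories.  [comp g f] is  g . f  (f first).                        *)

Record Category := {
  ob :> Type;
  hom : ob -> ob -> Type;
  idm : forall a, hom a a;
  comp : forall a b c, hom b c -> hom a b -> hom a c;
  comp_id_l : forall a b (f : hom a b), comp (idm b) f = f;
  comp_id_r : forall a b (f : hom a b), comp f (idm a) = f;
  comp_assoc : forall a b c d (h : hom c d) (g : hom b c) (f : hom a b),
      comp h (comp g f) = comp (comp h g) f
}.

Arguments hom {_} _ _.
Arguments idm {_} _.
Arguments comp {_ _ _ _} _ _.

Notation "g · f" := (comp g f) (at level 40, left associativity).

Record Monoidal (C : Category) := {
  tens : C -> C -> C;
  tensm : forall a a' b b', hom a a' -> hom b b' -> hom (tens a b) (tens a' b');
  tens_id : forall a b, tensm (idm a) (idm b) = idm (tens a b);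
  tens_comp : forall a a' a'' b b' b''
      (f : hom a a') (f' : hom a' a'') (g : hom b b') (g' : hom b' b''),
      tensm (f' · f) (g' · g) = tensm f' g' · tensm f g;
  munit : C;
  assoc : forall a b c, hom (tens (tens a b) c) (tens a (tens b c));
  assoc_inv : forall a b c, hom (tens a (tens b c)) (tens (tens a b) c);
  assoc_iso1 : forall a b c, assoc_inv a b c · assoc a b c = idm _;
  assoc_iso2 : forall a b c, assoc a b c · assoc_inv a b c = idm _;
  assoc_nat : forall a a' b b' c c' (f : hom a a') (g : hom b b') (h : hom c c'),
      assoc a' b' c' · tensm (tensm f g) h = tensm f (tensm g h) · assoc a b c;
  lunit : forall a, hom (tens munit a) a;
  lunit_inv : forall a, hom a (tens munit a);
  lunit_iso1 : forall a, lunit_inv a · lunit a = idm _;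
  lunit_iso2 : forall a, lunit a · lunit_inv a = idm _;
  lunit_nat : forall a a' (f : hom a a'), lunit a' · tensm (idm munit) f = f · lunit a;
  runit : forall a, hom (tens a munit) a;
  runit_inv : forall a, hom a (tens a munit);
  runit_iso1 : forall a, runit_inv a · runit a = idm _;
  runit_iso2 : forall a, runit a · runit_inv a = idm _;
  runit_nat : forall a a' (f : hom a a'), runit a' · tensm f (idm munit) = f · runit a;
  pentagon : forall a b c d,
      assoc a b (tens c d) · assoc (tens a b) c d
      = tensm (idm a) (assoc b c d) · assoc a (tens b c) d · tensm (assoc a b c) (idm d);
  triangle : forall a b,
      tensm (idm a) (lunit b) · assoc a munit b = tensm (runit a) (idm b)
}.

(* A preduoidal category is a category C with two monoidal structures
   (circ, bot) and (bullet, 1); in the theorem these are explicit binders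
   [C], [Mc], [Mb]. *)

Record Monad (C : Category) := {
  Tob :> C -> C;
  Tm : forall a b, hom a b -> hom (Tob a) (Tob b);
  Tm_id : forall a, Tm (idm a) = idm (Tob a);
  Tm_comp : forall a b c (g : hom b c) (f : hom a b), Tm (g · f) = Tm g · Tm f;
  mu : forall a, hom (Tob (Tob a)) (Tob a);
  eta : forall a, hom a (Tob a);
  mu_nat : forall a b (f : hom a b), Tm f · mu a = mu b · Tm (Tm f);
  eta_nat : forall a b (f : hom a b), Tm f · eta a = eta b · f;
  mu_assoc : forall a, mu a · Tm (mu a) = mu a · mu (Tob a);
  mu_eta_l : forall a, mu a · eta (Tob a) = idm (Tob a);
  mu_eta_r : forall a, mu a · Tm (eta a) = idm (Tob a)
}.

Record Bimonad (C : Category) (M : Monoidal C) (T : Monad C) := {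
  T2 : forall a b, hom (T (tens M a b)) (tens M (T a) (T b));
  T0 : hom (T (munit M)) (munit M);
  T2_nat : forall a a' b b' (f : hom a a') (g : hom b b'),
      tensm M (Tm T f) (Tm T g) · T2 a b = T2 a' b' · Tm T (tensm M f g);
  T2_coassoc : forall a b c,
      assoc M (T a) (T b) (T c) · tensm M (T2 a b) (idm (T c)) · T2 (tens M a b) c
      = tensm M (idm (T a)) (T2 b c) · T2 a (tens M b c) · Tm T (assoc M a b c);
  T2_lunit : forall a,
      lunit M (T a) · tensm M T0 (idm (T a)) · T2 (munit M) a = Tm T (lunit M a);
  T2_runit : forall a,
      runit M (T a) · tensm M (idm (T a)) T0 · T2 a (munit M) = Tm T (runit M a);
  mu_T2 : forall a b,
      T2 a b · mu T (tens M a b)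
      = tensm M (mu T a) (mu T b) · T2 (T a) (T b) · Tm T (T2 a b);
  mu_T0 : T0 · mu T (munit M) = T0 · Tm T T0;
  eta_T2 : forall a b, T2 a b · eta T (tens M a b) = tensm M (eta T a) (eta T b);
  eta_T0 : T0 · eta T (munit M) = idm (munit M)
}.

(* A separately opmonoidal monad on the preduoidal category (C, Mc, Mb) is
   a monad T together with Bc : Bimonad Mc T and Bb : Bimonad Mb T. *)

Record Alg (C : Category) (T : Monad C) := {
  carrier : C;
  act : hom (T carrier) carrier;
  act_unit : act · eta T carrier = idm carrier;
  act_assoc : act · Tm T act = act · mu T carrier
}.

Definition is_alg_hom (C : Category) (T : Monad C) (a b : C)
  (alpha : hom (T a) a) (beta : hom (T b) b) (f : hom a b) : Prop :=
  f · alpha = beta · Tm T f.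

Section Lifting.
Variables (C : Category) (M : Monoidal C) (T : Monad C) (B : Bimonad M T).

Definition lift_act (a b : C) (alpha : hom (T a) a) (beta : hom (T b) b)
  : hom (T (tens M a b)) (tens M a b) :=
  tensm M alpha beta · T2 B a b.

Lemma lift_act_unit (A A' : Alg T) :
  lift_act (act A) (act A') · eta T (tens M (carrier A) (carrier A'))
  = idm (tens M (carrier A) (carrier A')).
Proof.
  unfold lift_act. rewrite <- comp_assoc, eta_T2, <- tens_comp,
    !act_unit. apply tens_id.
Qed.

Lemma lift_act_assoc (A A' : Alg T) :
  lift_act (act A) (act A') · Tm T (lift_act (act A) (act A'))
  = lift_act (act A) (act A') · mu T (tens M (carrier A) (carrier A')).
Proof.
  unfold lift_act. rewrite Tm_comp.
  rewrite !comp_assoc.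
  rewrite <- (comp_assoc _ (T2 B _ _) (Tm T _)), <- T2_nat.
  rewrite !comp_assoc, <- tens_comp, !act_assoc, tens_comp.
  rewrite <- !comp_assoc. f_equal.
  rewrite !comp_assoc, <- mu_T2. reflexivity.
Qed.

Definition alg_tens (A A' : Alg T) : Alg T :=
  {| carrier := tens M (carrier A) (carrier A');
     act := lift_act (act A) (act A');
     act_unit := lift_act_unit A A';
     act_assoc := lift_act_assoc A A' |}.

Lemma unit_act_assoc : T0 B · Tm T (T0 B) = T0 B · mu T (munit M).
Proof. symmetry. apply mu_T0. Qed.

Definition alg_unit : Alg T :=
  {| carrier := munit M; act := T0 B;
     act_unit := eta_T0 B; act_assoc := unit_act_assoc |}.

End Lifting.

Lemma free_act_assoc (C : Category) (T : Monad C) (a : C) :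
  mu T a · Tm T (mu T a) = mu T a · mu T (T a).
Proof. apply mu_assoc. Qed.

Definition free_alg (C : Category) (T : Monad C) (a : C) : Alg T :=
  {| carrier := T a; act := mu T a;
     act_unit := mu_eta_l T a; act_assoc := free_act_assoc T a |}.

Section Duoidal.
Variables (C : Category) (Mc Mb : Monoidal C) (T : Monad C)
          (Bc : Bimonad Mc T) (Bb : Bimonad Mb T).

Local Notation "a ⊙ b" := (tens Mc a b) (at level 33, left associativity).
Local Notation "a ● b" := (tens Mb a b) (at level 33, left associativity).
Local Notation "f ⊙' g" := (tensm Mc f g) (at level 33, left associativity).
Local Notation "f ●' g" := (tensm Mb f g) (at level 33, left associativity).
Local Notation bot := (munit Mc).
Local Notation one := (munit Mb).
Local Notation "'αc'" := (assoc Mc).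
Local Notation "'αb'" := (assoc Mb).
Local Notation "'λc'" := (lunit Mc).
Local Notation "'λb'" := (lunit Mb).
Local Notation "'ρc'" := (runit Mc).
Local Notation "'ρb'" := (runit Mb).
Local Notation "'λc⁻'" := (lunit_inv Mc).
Local Notation "'λb⁻'" := (lunit_inv Mb).
Local Notation "'ρc⁻'" := (runit_inv Mc).
Local Notation "'ρb⁻'" := (runit_inv Mb).
Local Notation "⌊ A ⌋" := (carrier A) (at level 0, A at level 99).
Local Notation AC := (alg_tens Bc).
Local Notation AB := (alg_tens Bb).
Local Notation Ubot := (alg_unit Bc).
Local Notation Uone := (alg_unit Bb).
Local Notation T0c := (T0 Bc).
Local Notation T0b := (T0 Bb).
Local Notation T2c := (T2 Bc).
Local Notation T2b := (T2 Bb).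

Definition XiType : Type :=
  forall A B Cc D : Alg T, hom ((⌊A⌋ ● ⌊B⌋) ⊙ (⌊Cc⌋ ● ⌊D⌋)) ((⌊A⌋ ⊙ ⌊Cc⌋) ● (⌊B⌋ ⊙ ⌊D⌋)).

Definition RType : Type :=
  forall a b c d : C, hom ((a ● b) ⊙ (c ● d)) ((T a ⊙ T c) ● (T b ⊙ T d)).

Definition structure_alg_homs (nu : hom bot (bot ● bot)) (varpi : hom (one ⊙ one) one)
  (iota : hom bot one) : Prop :=
  is_alg_hom (act Ubot) (act (AB Ubot Ubot)) nu
  /\ is_alg_hom (act (AC Uone Uone)) (act Uone) varpi
  /\ is_alg_hom (act Ubot) (act Uone) iota.

(* (1, varpi, iota) monoid for circ; (bot, nu, iota) comonoid for bullet
   (associators/unitors of D^T are those of D, the forgetful functor being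
   strict monoidal) *)
Definition monoid_comonoid (nu : hom bot (bot ● bot)) (varpi : hom (one ⊙ one) one)
  (iota : hom bot one) : Prop :=
  (varpi · (varpi ⊙' idm one) = varpi · (idm one ⊙' varpi) · αc one one one
   /\ varpi · (iota ⊙' idm one) = λc one
   /\ varpi · (idm one ⊙' iota) = ρc one)
  /\
  (αb bot bot bot · (nu ●' idm bot) · nu = (idm bot ●' nu) · nu
   /\ λb bot · (iota ●' idm bot) · nu = idm bot
   /\ ρb bot · (idm bot ●' iota) · nu = idm bot).

Definition is_duoidal_lift (xi : XiType) (nu : hom bot (bot ● bot))
  (varpi : hom (one ⊙ one) one) (iota : hom bot one) : Prop :=
  (forall (A A' B B' Cc Cc' D D' : Alg T)
          (f : hom ⌊A⌋ ⌊A'⌋) (g : hom ⌊B⌋ ⌊B'⌋) (h : hom ⌊Cc⌋ ⌊Cc'⌋) (k : hom ⌊D⌋ ⌊D'⌋),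
      is_alg_hom (act A) (act A') f -> is_alg_hom (act B) (act B') g ->
      is_alg_hom (act Cc) (act Cc') h -> is_alg_hom (act D) (act D') k ->
      ((f ⊙' h) ●' (g ⊙' k)) · xi A B Cc D = xi A' B' Cc' D' · ((f ●' g) ⊙' (h ●' k)))
  /\ (forall A B Cc D : Alg T,
      is_alg_hom (act (AC (AB A B) (AB Cc D))) (act (AB (AC A Cc) (AC B D))) (xi A B Cc D))
  /\ structure_alg_homs nu varpi iota
  /\ monoid_comonoid nu varpi iota
  /\ (forall X Y A B Cc D : Alg T,
      (αc ⌊X⌋ ⌊A⌋ ⌊Cc⌋ ●' αc ⌊Y⌋ ⌊B⌋ ⌊D⌋) · xi (AC X A) (AC Y B) Cc D
        · (xi X Y A B ⊙' idm (⌊Cc⌋ ● ⌊D⌋))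
      = xi X Y (AC A Cc) (AC B D) · (idm (⌊X⌋ ● ⌊Y⌋) ⊙' xi A B Cc D)
        · αc (⌊X⌋ ● ⌊Y⌋) (⌊A⌋ ● ⌊B⌋) (⌊Cc⌋ ● ⌊D⌋))
  /\ (forall X A Cc Y B D : Alg T,
      αb (⌊X⌋ ⊙ ⌊Y⌋) (⌊A⌋ ⊙ ⌊B⌋) (⌊Cc⌋ ⊙ ⌊D⌋) · (xi X A Y B ●' idm (⌊Cc⌋ ⊙ ⌊D⌋))
        · xi (AB X A) Cc (AB Y B) D
      = (idm (⌊X⌋ ⊙ ⌊Y⌋) ●' xi A Cc B D) · xi X (AB A Cc) Y (AB B D)
        · (αb ⌊X⌋ ⌊A⌋ ⌊Cc⌋ ⊙' αb ⌊Y⌋ ⌊B⌋ ⌊D⌋))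
  /\ (forall A B : Alg T,
      xi Ubot Ubot A B · (nu ⊙' idm (⌊A⌋ ● ⌊B⌋))
      = (λc⁻ ⌊A⌋ ●' λc⁻ ⌊B⌋) · λc (⌊A⌋ ● ⌊B⌋))
  /\ (forall A B : Alg T,
      xi A B Ubot Ubot · (idm (⌊A⌋ ● ⌊B⌋) ⊙' nu)
      = (ρc⁻ ⌊A⌋ ●' ρc⁻ ⌊B⌋) · ρc (⌊A⌋ ● ⌊B⌋))
  /\ (forall A B : Alg T,
      (varpi ●' idm (⌊A⌋ ⊙ ⌊B⌋)) · xi Uone A Uone B
      = λb⁻ (⌊A⌋ ⊙ ⌊B⌋) · (λb ⌊A⌋ ⊙' λb ⌊B⌋))
  /\ (forall A B : Alg T,
      (idm (⌊A⌋ ⊙ ⌊B⌋) ●' varpi) · xi A Uone B Uone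
      = ρb⁻ (⌊A⌋ ⊙ ⌊B⌋) · (ρb ⌊A⌋ ⊙' ρb ⌊B⌋)).

Local Notation "'Tf' f" := (Tm T f) (at level 10).

Definition is_Rmatrix (R : RType) (nu : hom bot (bot ● bot))
  (varpi : hom (one ⊙ one) one) (iota : hom bot one) : Prop :=
  (forall a a' b b' c c' d d'
          (f : hom a a') (g : hom b b') (h : hom c c') (k : hom d d'),
      ((Tf f ⊙' Tf h) ●' (Tf g ⊙' Tf k)) · R a b c d
      = R a' b' c' d' · ((f ●' g) ⊙' (h ●' k)))
  /\ structure_alg_homs nu varpi iota
  /\ monoid_comonoid nu varpi iota
  /\ (forall A B : Alg T,
      ((T0c ⊙' act A) ●' (T0c ⊙' act B)) · R bot bot ⌊A⌋ ⌊B⌋ · (nu ⊙' idm (⌊A⌋ ● ⌊B⌋))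
      = (λc⁻ ⌊A⌋ ●' λc⁻ ⌊B⌋) · λc (⌊A⌋ ● ⌊B⌋))
  /\ (forall A B : Alg T,
      ((act A ⊙' T0c) ●' (act B ⊙' T0c)) · R ⌊A⌋ ⌊B⌋ bot bot · (idm (⌊A⌋ ● ⌊B⌋) ⊙' nu)
      = (ρc⁻ ⌊A⌋ ●' ρc⁻ ⌊B⌋) · ρc (⌊A⌋ ● ⌊B⌋))
  /\ (forall A B : Alg T,
      (varpi ●' idm (⌊A⌋ ⊙ ⌊B⌋)) · ((T0b ⊙' T0b) ●' (act A ⊙' act B)) · R one ⌊A⌋ one ⌊B⌋
      = λb⁻ (⌊A⌋ ⊙ ⌊B⌋) · (λb ⌊A⌋ ⊙' λb ⌊B⌋))
  /\ (forall A B : Alg T,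
      (idm (⌊A⌋ ⊙ ⌊B⌋) ●' varpi) · ((act A ⊙' act B) ●' (T0b ⊙' T0b)) · R ⌊A⌋ one ⌊B⌋ one
      = ρb⁻ (⌊A⌋ ⊙ ⌊B⌋) · (ρb ⌊A⌋ ⊙' ρb ⌊B⌋))
  /\ (forall a b c d : C,
      ((mu T a ⊙' mu T c) ●' (mu T b ⊙' mu T d)) · R (T a) (T b) (T c) (T d)
        · (T2b a b ⊙' T2b c d) · T2c (a ● b) (c ● d)
      = ((mu T a ⊙' mu T c) ●' (mu T b ⊙' mu T d))
        · (T2c (T a) (T c) ●' T2c (T b) (T d)) · T2b (T a ⊙ T c) (T b ⊙ T d)
        · Tf (R a b c d))
  (* (R-1), associators inserted as in (A1) *)
  /\ (forall a b c d x y : C,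
      (αc (T a) (T c) (T x) ●' αc (T b) (T d) (T y))
        · ((mu T a ⊙' mu T c ⊙' idm (T x)) ●' (mu T b ⊙' mu T d ⊙' idm (T y)))
        · ((T2c (T a) (T c) ⊙' idm (T x)) ●' (T2c (T b) (T d) ⊙' idm (T y)))
        · R (T a ⊙ T c) (T b ⊙ T d) x y · (R a b c d ⊙' idm (x ● y))
      = ((idm (T a) ⊙' (mu T c ⊙' mu T x)) ●' (idm (T b) ⊙' (mu T d ⊙' mu T y)))
        · ((idm (T a) ⊙' T2c (T c) (T x)) ●' (idm (T b) ⊙' T2c (T d) (T y)))
        · R a b (T c ⊙ T x) (T d ⊙ T y) · (idm (a ● b) ⊙' R c d x y)
        · αc (a ● b) (c ● d) (x ● y))
  (* (R-2), associators inserted as in (A2) *)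
  /\ (forall x a c y b d : C,
      αb (T x ⊙ T y) (T a ⊙ T b) (T c ⊙ T d)
        · (((mu T x ⊙' mu T y) ●' (mu T a ⊙' mu T b)) ●' idm (T c ⊙ T d))
        · (R (T x) (T a) (T y) (T b) ●' idm (T c ⊙ T d))
        · ((T2b x a ⊙' T2b y b) ●' idm (T c ⊙ T d))
        · R (x ● a) c (y ● b) d
      = (idm (T x ⊙ T y) ●' ((mu T a ⊙' mu T b) ●' (mu T c ⊙' mu T d)))
        · (idm (T x ⊙ T y) ●' R (T a) (T c) (T b) (T d))
        · (idm (T x ⊙ T y) ●' (T2b a c ⊙' T2b b d))
        · R x (a ● c) y (b ● d) · (αb x a c ⊙' αb y b d)).

Definition xi_of_R (R : RType) : XiType :=
  fun A B Cc D => ((act A ⊙' act Cc) ●' (act B ⊙' act D)) · R ⌊A⌋ ⌊B⌋ ⌊Cc⌋ ⌊D⌋.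

Definition R_of_xi (xi : XiType) : RType :=
  fun a b c d =>
    xi (free_alg T a) (free_alg T b) (free_alg T c) (free_alg T d)
    · ((eta T a ●' eta T b) ⊙' (eta T c ●' eta T d)).

End Duoidal.


(* An algebra morphism out of a free algebra T a is determined by its restriction along
   eta_a, and every algebra action act A : F(carrier A) -> A is such a morphism.  Hence an
   interchange law xi on D^T is determined by its components at free algebras, precomposed
   with units (this is R), and is recovered from R by postcomposing with the actions.  Under
   this dictionary each duoidal axiom on D^T corresponds to one R-matrix axiom: naturality of
   xi in algebra morphisms to naturality of R, xi being an algebra morphism to (R-lift), (A1)
   and (A2) to (R-1) and (R-2), and the unit laws to (R-unit).  One direction instantiates the
   duoidal axioms at free algebras; the other pushes the actions through R by naturality. *)

Ltac rewrite_lhs tac :=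
  match goal with |- _ = ?r => let r' := fresh in set (r' := r); tac; subst r' end.
Ltac rewrite_rhs tac :=
  match goal with |- ?l = _ => let l' := fresh in set (l' := l); tac; subst l' end.

(* Instances of lemmas at free or lifted algebras match the goal only once their
   [carrier]/[act] projections are reduced and [lift_act] is unfolded. *)
Ltac rewrite_simpl lem :=
  let H := fresh in pose proof lem as H; simpl in H; unfold lift_act in H; rewrite H; clear H.

Section TensorFunctor.
Context {C : Category} {M : Monoidal C}.

Lemma tensm_comp_l {a a' a'' b b'} (f' : hom a' a'') (f : hom a a') (g : hom b b') :
  tensm M (f' · f) g = tensm M f' g · tensm M f (idm b).
Proof. rewrite <- tens_comp, comp_id_r. reflexivity. Qed.

Lemma tensm_comp_r {a a' b b' b''} (f : hom a a') (g' : hom b' b'') (g : hom b b') :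
  tensm M f (g' · g) = tensm M f g' · tensm M (idm a) g.
Proof. rewrite <- tens_comp, comp_id_r. reflexivity. Qed.

End TensorFunctor.

Section AlgebraMorphisms.
Context {C : Category} {T : Monad C}.

Lemma idm_alg_hom (A : Alg T) : is_alg_hom (act A) (act A) (idm (carrier A)).
Proof. unfold is_alg_hom. rewrite Tm_id, comp_id_l, comp_id_r. reflexivity. Qed.

Lemma act_alg_hom (A : Alg T) : is_alg_hom (act (free_alg T (carrier A))) (act A) (act A).
Proof. unfold is_alg_hom; simpl. symmetry. apply act_assoc. Qed.

Lemma Tm_alg_hom {a b : C} (f : hom a b) :
  is_alg_hom (act (free_alg T a)) (act (free_alg T b)) (Tm T f).
Proof. unfold is_alg_hom; simpl. apply mu_nat. Qed.

Context {M : Monoidal C} (B : Bimonad M T).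

Lemma tensm_alg_hom {a a' b b'} {alpha : hom (T a) a} {alpha' : hom (T a') a'}
  {beta : hom (T b) b} {beta' : hom (T b') b'} {f : hom a a'} {g : hom b b'} :
  is_alg_hom alpha alpha' f -> is_alg_hom beta beta' g ->
  is_alg_hom (lift_act B alpha beta) (lift_act B alpha' beta') (tensm M f g).
Proof.
  unfold is_alg_hom, lift_act; intros Hf Hg.
  rewrite comp_assoc, <- tens_comp, Hf, Hg, tens_comp, <- !comp_assoc, T2_nat.
  reflexivity.
Qed.

Lemma assoc_lift_act_Tm (X A Cc : Alg T) :
  assoc M _ _ _ · tensm M (lift_act B (act X) (act A)) (act Cc)
    · tensm M (Tm T (tensm M (act X) (act A))) (Tm T (idm (carrier Cc)))
  = tensm M (act X) (tensm M (act A) (act Cc)) · assoc M _ _ _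
    · tensm M (tensm M (mu T (carrier X)) (mu T (carrier A))) (idm (T (carrier Cc)))
    · tensm M (T2 B _ _) (idm (T (carrier Cc))).
Proof.
  pose proof (tensm_alg_hom (act_alg_hom X) (act_alg_hom A)) as act_hom.
  unfold is_alg_hom in act_hom; simpl in act_hom.
  rewrite <- comp_assoc, <- tens_comp, <- act_hom, Tm_id, comp_id_r.
  unfold lift_act.
  rewrite !tensm_comp_l, !comp_assoc, assoc_nat. reflexivity.
Qed.

Lemma tensm_lift_act_Tm (X A Cc : Alg T) :
  tensm M (act X) (lift_act B (act A) (act Cc))
    · tensm M (Tm T (idm (carrier X))) (Tm T (tensm M (act A) (act Cc)))
  = tensm M (act X) (tensm M (act A) (act Cc))
    · tensm M (idm (T (carrier X))) (tensm M (mu T (carrier A)) (mu T (carrier Cc)))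
    · tensm M (idm (T (carrier X))) (T2 B _ _).
Proof.
  pose proof (tensm_alg_hom (act_alg_hom A) (act_alg_hom Cc)) as act_hom.
  unfold is_alg_hom in act_hom; simpl in act_hom.
  rewrite <- comp_assoc, <- !tens_comp, Tm_id, !comp_id_r, <- act_hom. reflexivity.
Qed.

Lemma lift_act_Tm_tensm a a' b b' (alpha : hom (T a') a') (beta : hom (T b') b')
  (f : hom a a') (g : hom b b') :
  lift_act B alpha beta · Tm T (tensm M f g)
  = tensm M (alpha · Tm T f) (beta · Tm T g) · T2 B a b.
Proof. unfold lift_act. rewrite <- comp_assoc, <- T2_nat, comp_assoc, tens_comp. reflexivity. Qed.

Lemma lift_act_free_Tm_eta (a b : C) :
  lift_act B (mu T a) (mu T b) · Tm T (tensm M (eta T a) (eta T b)) = T2 B a b.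
Proof. rewrite lift_act_Tm_tensm, !mu_eta_r, tens_id. apply comp_id_l. Qed.

Lemma T2_alg_hom (a b : C) :
  is_alg_hom (act (free_alg T (tens M a b)))
    (act (alg_tens B (free_alg T a) (free_alg T b))) (T2 B a b).
Proof. unfold is_alg_hom; simpl. unfold lift_act. apply mu_T2. Qed.

End AlgebraMorphisms.

Arguments Tm_alg_hom {C} T {a b} f.

Section Correspondence.
Variables (C : Category) (Mc Mb : Monoidal C) (T : Monad C)
          (Bc : Bimonad Mc T) (Bb : Bimonad Mb T).

Local Notation "a ⊙ b" := (tens Mc a b) (at level 33, left associativity).
Local Notation "a ● b" := (tens Mb a b) (at level 33, left associativity).
Local Notation "f ⊙' g" := (tensm Mc f g) (at level 33, left associativity).
Local Notation "f ●' g" := (tensm Mb f g) (at level 33, left associativity).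
Local Notation "⌊ A ⌋" := (carrier A) (at level 0, A at level 99).
Local Notation "'Tf' f" := (Tm T f) (at level 10).
Local Notation AC := (alg_tens Bc).
Local Notation AB := (alg_tens Bb).
Local Notation F := (free_alg T).
Local Notation T2c := (T2 Bc).
Local Notation T2b := (T2 Bb).
Local Notation "'αc'" := (assoc Mc).
Local Notation "'αb'" := (assoc Mb).

Section FromRmatrix.
Variable R : RType Mc Mb T.
Hypothesis R_natural : forall a a' b b' c c' d d'
    (f : hom a a') (g : hom b b') (h : hom c c') (k : hom d d'),
  ((Tf f ⊙' Tf h) ●' (Tf g ⊙' Tf k)) · R a b c d
  = R a' b' c' d' · ((f ●' g) ⊙' (h ●' k)).

Lemma R_of_xi_of_R a b c d : R_of_xi (xi_of_R R) a b c d = R a b c d.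
Proof.
  unfold R_of_xi, xi_of_R; simpl.
  rewrite <- comp_assoc, <- R_natural, comp_assoc, <- !tens_comp, !mu_eta_r, !tens_id.
  apply comp_id_l.
Qed.

Lemma xi_of_R_natural {A A' B B' Cc Cc' D D' : Alg T}
  {f : hom ⌊A⌋ ⌊A'⌋} {g : hom ⌊B⌋ ⌊B'⌋} {h : hom ⌊Cc⌋ ⌊Cc'⌋} {k : hom ⌊D⌋ ⌊D'⌋} :
  is_alg_hom (act A) (act A') f -> is_alg_hom (act B) (act B') g ->
  is_alg_hom (act Cc) (act Cc') h -> is_alg_hom (act D) (act D') k ->
  ((f ⊙' h) ●' (g ⊙' k)) · xi_of_R R A B Cc D
  = xi_of_R R A' B' Cc' D' · ((f ●' g) ⊙' (h ●' k)).
Proof.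
  unfold xi_of_R, is_alg_hom; intros Hf Hg Hh Hk.
  rewrite comp_assoc, <- !tens_comp, Hf, Hg, Hh, Hk, !tens_comp.
  rewrite <- comp_assoc, R_natural, comp_assoc. reflexivity.
Qed.

Hypothesis R_lift : forall a b c d : C,
  ((mu T a ⊙' mu T c) ●' (mu T b ⊙' mu T d)) · R (T a) (T b) (T c) (T d)
    · (T2b a b ⊙' T2b c d) · T2c (a ● b) (c ● d)
  = ((mu T a ⊙' mu T c) ●' (mu T b ⊙' mu T d))
    · (T2c (T a) (T c) ●' T2c (T b) (T d)) · T2b (T a ⊙ T c) (T b ⊙ T d)
    · Tf (R a b c d).

Lemma xi_of_R_alg_hom (A B Cc D : Alg T) :
  is_alg_hom (act (AC (AB A B) (AB Cc D))) (act (AB (AC A Cc) (AC B D))) (xi_of_R R A B Cc D).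
Proof.
  pose proof (tensm_alg_hom Bb (tensm_alg_hom Bc (act_alg_hom A) (act_alg_hom Cc))
                               (tensm_alg_hom Bc (act_alg_hom B) (act_alg_hom D))) as act_hom.
  unfold is_alg_hom, xi_of_R in *; simpl in *; unfold lift_act in *.
  rewrite Tm_comp, (comp_assoc _ (Tf _) (Tf _)), <- act_hom, !tens_comp.
  rewrite_lhs ltac:(rewrite !comp_assoc, <- (comp_assoc _ (R _ _ _ _)), <- R_natural,
    !comp_assoc, <- !tens_comp, !act_assoc, !tens_comp).
  rewrite <- !comp_assoc. f_equal. rewrite !comp_assoc. apply R_lift.
Qed.

Hypothesis R_assoc_circ : forall a b c d x y : C,
  (αc (T a) (T c) (T x) ●' αc (T b) (T d) (T y))
    · ((mu T a ⊙' mu T c ⊙' idm (T x)) ●' (mu T b ⊙' mu T d ⊙' idm (T y)))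
    · ((T2c (T a) (T c) ⊙' idm (T x)) ●' (T2c (T b) (T d) ⊙' idm (T y)))
    · R (T a ⊙ T c) (T b ⊙ T d) x y · (R a b c d ⊙' idm (x ● y))
  = ((idm (T a) ⊙' (mu T c ⊙' mu T x)) ●' (idm (T b) ⊙' (mu T d ⊙' mu T y)))
    · ((idm (T a) ⊙' T2c (T c) (T x)) ●' (idm (T b) ⊙' T2c (T d) (T y)))
    · R a b (T c ⊙ T x) (T d ⊙ T y) · (idm (a ● b) ⊙' R c d x y)
    · αc (a ● b) (c ● d) (x ● y).

(* Once the actions are pushed through [R] by naturality, both sides are the same action
   prefix followed by the two sides of (R-1). *)
Lemma xi_of_R_assoc_circ (X Y A B Cc D : Alg T) :
  (αc ⌊X⌋ ⌊A⌋ ⌊Cc⌋ ●' αc ⌊Y⌋ ⌊B⌋ ⌊D⌋) · xi_of_R R (AC X A) (AC Y B) Cc D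
    · (xi_of_R R X Y A B ⊙' idm (⌊Cc⌋ ● ⌊D⌋))
  = xi_of_R R X Y (AC A Cc) (AC B D) · (idm (⌊X⌋ ● ⌊Y⌋) ⊙' xi_of_R R A B Cc D)
    · αc (⌊X⌋ ● ⌊Y⌋) (⌊A⌋ ● ⌊B⌋) (⌊Cc⌋ ● ⌊D⌋).
Proof.
  unfold xi_of_R; simpl.
  rewrite (tensm_comp_l _ (R _ _ _ _)), <- (tens_id Mb ⌊Cc⌋ ⌊D⌋), !comp_assoc,
    <- (comp_assoc _ (R (⌊X⌋ ⊙ ⌊A⌋) _ _ _)), <- R_natural, comp_assoc, <- !tens_comp.
  rewrite_lhs ltac:(rewrite !assoc_lift_act_Tm, !tens_comp, tens_id).
  rewrite_rhs ltac:(rewrite (tensm_comp_r _ _ (R _ _ _ _)), <- (tens_id Mb ⌊X⌋ ⌊Y⌋), comp_assoc,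
    <- (comp_assoc _ (R ⌊X⌋ ⌊Y⌋ _ _)), <- R_natural, comp_assoc, <- tens_comp,
    !tensm_lift_act_Tm, !tens_comp, !tens_id).
  rewrite <- !comp_assoc. f_equal. rewrite !comp_assoc. apply R_assoc_circ.
Qed.

Lemma xi_of_R_lift_act (X A Y B : Alg T) :
  xi_of_R R X A Y B · (lift_act Bb (act X) (act A) ⊙' lift_act Bb (act Y) (act B))
  = ((act X ⊙' act Y) ●' (act A ⊙' act B)) · xi_of_R R (F ⌊X⌋) (F ⌊A⌋) (F ⌊Y⌋) (F ⌊B⌋)
    · (T2b ⌊X⌋ ⌊A⌋ ⊙' T2b ⌊Y⌋ ⌊B⌋).
Proof.
  pose proof (xi_of_R_natural (act_alg_hom X) (act_alg_hom A) (act_alg_hom Y) (act_alg_hom B))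
    as acts_natural; simpl in acts_natural.
  unfold lift_act. rewrite tens_comp, comp_assoc, <- acts_natural. reflexivity.
Qed.

Hypothesis R_assoc_bullet : forall x a c y b d : C,
  αb (T x ⊙ T y) (T a ⊙ T b) (T c ⊙ T d)
    · (((mu T x ⊙' mu T y) ●' (mu T a ⊙' mu T b)) ●' idm (T c ⊙ T d))
    · (R (T x) (T a) (T y) (T b) ●' idm (T c ⊙ T d))
    · ((T2b x a ⊙' T2b y b) ●' idm (T c ⊙ T d))
    · R (x ● a) c (y ● b) d
  = (idm (T x ⊙ T y) ●' ((mu T a ⊙' mu T b) ●' (mu T c ⊙' mu T d)))
    · (idm (T x ⊙ T y) ●' R (T a) (T c) (T b) (T d))
    · (idm (T x ⊙ T y) ●' (T2b a c ⊙' T2b b d))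
    · R x (a ● c) y (b ● d) · (αb x a c ⊙' αb y b d).

Lemma xi_of_R_assoc_bullet (X A Cc Y B D : Alg T) :
  αb (⌊X⌋ ⊙ ⌊Y⌋) (⌊A⌋ ⊙ ⌊B⌋) (⌊Cc⌋ ⊙ ⌊D⌋) · (xi_of_R R X A Y B ●' idm (⌊Cc⌋ ⊙ ⌊D⌋))
    · xi_of_R R (AB X A) Cc (AB Y B) D
  = (idm (⌊X⌋ ⊙ ⌊Y⌋) ●' xi_of_R R A Cc B D) · xi_of_R R X (AB A Cc) Y (AB B D)
    · (αb ⌊X⌋ ⌊A⌋ ⌊Cc⌋ ⊙' αb ⌊Y⌋ ⌊B⌋ ⌊D⌋).
Proof.
  unfold xi_of_R at 2 4; simpl.
  rewrite_lhs ltac:(rewrite comp_assoc, <- (comp_assoc _ (xi_of_R R _ _ _ _ ●' _)), <- tens_comp,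
    comp_id_l, xi_of_R_lift_act, !tensm_comp_l, !comp_assoc, (assoc_nat Mb)).
  rewrite_rhs ltac:(rewrite comp_assoc, <- tens_comp, comp_id_l, xi_of_R_lift_act, !tensm_comp_r).
  unfold xi_of_R; simpl.
  rewrite (tensm_comp_l _ (R _ _ _ _)), (tensm_comp_r _ _ (R _ _ _ _)).
  rewrite <- !comp_assoc. f_equal. rewrite !comp_assoc. apply R_assoc_bullet.
Qed.

End FromRmatrix.

Section FromInterchange.
Variable xi : XiType Mc Mb T.
Hypothesis xi_natural : forall (A A' B B' Cc Cc' D D' : Alg T)
    (f : hom ⌊A⌋ ⌊A'⌋) (g : hom ⌊B⌋ ⌊B'⌋) (h : hom ⌊Cc⌋ ⌊Cc'⌋) (k : hom ⌊D⌋ ⌊D'⌋),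
  is_alg_hom (act A) (act A') f -> is_alg_hom (act B) (act B') g ->
  is_alg_hom (act Cc) (act Cc') h -> is_alg_hom (act D) (act D') k ->
  ((f ⊙' h) ●' (g ⊙' k)) · xi A B Cc D = xi A' B' Cc' D' · ((f ●' g) ⊙' (h ●' k)).

Lemma alg_hom_R_of_xi {a b c d} {A B Cc D : Alg T} {p : hom (T a) ⌊A⌋} {q : hom (T b) ⌊B⌋}
  {r : hom (T c) ⌊Cc⌋} {s : hom (T d) ⌊D⌋} :
  is_alg_hom (mu T a) (act A) p -> is_alg_hom (mu T b) (act B) q ->
  is_alg_hom (mu T c) (act Cc) r -> is_alg_hom (mu T d) (act D) s ->
  ((p ⊙' r) ●' (q ⊙' s)) · R_of_xi xi a b c d
  = xi A B Cc D · (((p · eta T a) ●' (q · eta T b)) ⊙' ((r · eta T c) ●' (s · eta T d))).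
Proof.
  intros Hp Hq Hr Hs. unfold R_of_xi.
  rewrite comp_assoc, (xi_natural (F a) A (F b) B (F c) Cc (F d) D), <- comp_assoc, <- !tens_comp;
    trivial.
Qed.

Lemma R_of_xi_act_l (A B : Alg T) (x y : C) :
  ((act A ⊙' idm (T x)) ●' (act B ⊙' idm (T y))) · R_of_xi xi ⌊A⌋ ⌊B⌋ x y
  = xi A B (F x) (F y) · (idm (⌊A⌋ ● ⌊B⌋) ⊙' (eta T x ●' eta T y)).
Proof.
  rewrite_simpl (alg_hom_R_of_xi (act_alg_hom A) (act_alg_hom B)
    (idm_alg_hom (F x)) (idm_alg_hom (F y))).
  rewrite !act_unit, !comp_id_l, tens_id. reflexivity.
Qed.

Lemma R_of_xi_act_r (a b : C) (Cc D : Alg T) :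
  ((idm (T a) ⊙' act Cc) ●' (idm (T b) ⊙' act D)) · R_of_xi xi a b ⌊Cc⌋ ⌊D⌋
  = xi (F a) (F b) Cc D · ((eta T a ●' eta T b) ⊙' idm (⌊Cc⌋ ● ⌊D⌋)).
Proof.
  rewrite_simpl (alg_hom_R_of_xi (idm_alg_hom (F a)) (idm_alg_hom (F b))
    (act_alg_hom Cc) (act_alg_hom D)).
  rewrite !act_unit, !comp_id_l, tens_id. reflexivity.
Qed.

Lemma xi_of_R_of_xi (A B Cc D : Alg T) : xi_of_R (R_of_xi xi) A B Cc D = xi A B Cc D.
Proof.
  unfold xi_of_R.
  rewrite_simpl (alg_hom_R_of_xi (act_alg_hom A) (act_alg_hom B)
    (act_alg_hom Cc) (act_alg_hom D)).
  rewrite !act_unit, !tens_id.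
  apply comp_id_r.
Qed.

Lemma R_of_xi_natural a a' b b' c c' d d'
    (f : hom a a') (g : hom b b') (h : hom c c') (k : hom d d') :
  ((Tf f ⊙' Tf h) ●' (Tf g ⊙' Tf k)) · R_of_xi xi a b c d
  = R_of_xi xi a' b' c' d' · ((f ●' g) ⊙' (h ●' k)).
Proof.
  rewrite_simpl (alg_hom_R_of_xi (Tm_alg_hom T f) (Tm_alg_hom T g)
    (Tm_alg_hom T h) (Tm_alg_hom T k)).
  rewrite !eta_nat, !tens_comp.
  unfold R_of_xi. rewrite comp_assoc. reflexivity.
Qed.

Lemma R_of_xi_free (a b c d : C) :
  ((mu T a ⊙' mu T c) ●' (mu T b ⊙' mu T d)) · R_of_xi xi (T a) (T b) (T c) (T d)
  = xi (F a) (F b) (F c) (F d).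
Proof. exact (xi_of_R_of_xi (F a) (F b) (F c) (F d)). Qed.

Hypothesis xi_alg_hom : forall A B Cc D : Alg T,
  is_alg_hom (act (AC (AB A B) (AB Cc D))) (act (AB (AC A Cc) (AC B D))) (xi A B Cc D).

(* (R-lift) for [R_of_xi xi] says that [xi] at free algebras is a morphism of algebras. *)
Lemma R_of_xi_lift (a b c d : C) :
  ((mu T a ⊙' mu T c) ●' (mu T b ⊙' mu T d)) · R_of_xi xi (T a) (T b) (T c) (T d)
    · (T2b a b ⊙' T2b c d) · T2c (a ● b) (c ● d)
  = ((mu T a ⊙' mu T c) ●' (mu T b ⊙' mu T d))
    · (T2c (T a) (T c) ●' T2c (T b) (T d)) · T2b (T a ⊙ T c) (T b ⊙ T d)
    · Tf (R_of_xi xi a b c d).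
Proof.
  rewrite R_of_xi_free.
  pose proof (xi_alg_hom (F a) (F b) (F c) (F d)) as xi_free_hom.
  unfold is_alg_hom in xi_free_hom; simpl in xi_free_hom.
  unfold R_of_xi; simpl.
  rewrite Tm_comp, <- tens_comp, (comp_assoc _ (Tf _) (Tf _)).
  change (tensm Mb _ _ · T2b _ _) with
    (lift_act Bb (lift_act Bc (mu T a) (mu T c)) (lift_act Bc (mu T b) (mu T d))).
  rewrite <- xi_free_hom, <- (comp_assoc _ (lift_act _ _ _)), lift_act_Tm_tensm,
    !lift_act_free_Tm_eta.
  symmetry. apply comp_assoc.
Qed.

Hypothesis xi_assoc_circ : forall X Y A B Cc D : Alg T,
  (αc ⌊X⌋ ⌊A⌋ ⌊Cc⌋ ●' αc ⌊Y⌋ ⌊B⌋ ⌊D⌋) · xi (AC X A) (AC Y B) Cc D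
    · (xi X Y A B ⊙' idm (⌊Cc⌋ ● ⌊D⌋))
  = xi X Y (AC A Cc) (AC B D) · (idm (⌊X⌋ ● ⌊Y⌋) ⊙' xi A B Cc D)
    · αc (⌊X⌋ ● ⌊Y⌋) (⌊A⌋ ● ⌊B⌋) (⌊Cc⌋ ● ⌊D⌋).

Lemma R_of_xi_assoc_circ (a b c d x y : C) :
  (αc (T a) (T c) (T x) ●' αc (T b) (T d) (T y))
    · ((mu T a ⊙' mu T c ⊙' idm (T x)) ●' (mu T b ⊙' mu T d ⊙' idm (T y)))
    · ((T2c (T a) (T c) ⊙' idm (T x)) ●' (T2c (T b) (T d) ⊙' idm (T y)))
    · R_of_xi xi (T a ⊙ T c) (T b ⊙ T d) x y · (R_of_xi xi a b c d ⊙' idm (x ● y))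
  = ((idm (T a) ⊙' (mu T c ⊙' mu T x)) ●' (idm (T b) ⊙' (mu T d ⊙' mu T y)))
    · ((idm (T a) ⊙' T2c (T c) (T x)) ●' (idm (T b) ⊙' T2c (T d) (T y)))
    · R_of_xi xi a b (T c ⊙ T x) (T d ⊙ T y) · (idm (a ● b) ⊙' R_of_xi xi c d x y)
    · αc (a ● b) (c ● d) (x ● y).
Proof.
  rewrite_lhs ltac:(rewrite <- (comp_assoc _ (tensm Mb (tensm Mc (tensm Mc (mu T _) _) _) _)),
    <- tens_comp, <- !(tens_comp Mc (T2c _ _)), !comp_id_l,
    <- (comp_assoc _ _ (R_of_xi xi (T a ⊙ T c) _ _ _));
    rewrite_simpl (R_of_xi_act_l (AC (F a) (F c)) (AC (F b) (F d)) x y)).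
  rewrite_rhs ltac:(rewrite <- !tens_comp, !comp_id_l;
    rewrite_simpl (R_of_xi_act_r a b (AC (F c) (F x)) (AC (F d) (F y)))).
  unfold R_of_xi.
  rewrite_lhs ltac:(rewrite <- !comp_assoc, <- tens_comp, comp_id_l, comp_id_r,
    <- (comp_id_l (eta T x ●' eta T y)), tens_comp, !comp_assoc; simpl;
    rewrite_simpl (xi_assoc_circ (F a) (F b) (F c) (F d) (F x) (F y));
    rewrite <- (comp_assoc _ (αc _ _ _)), assoc_nat, comp_assoc).
  rewrite_rhs ltac:(rewrite <- (comp_assoc _ (tensm Mc (tensm Mb (eta T a) _) _)), <- tens_comp,
    comp_id_l, comp_id_r, <- (comp_id_l (eta T a ●' eta T b)), tens_comp, !comp_assoc).
  reflexivity.
Qed.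

Hypothesis xi_assoc_bullet : forall X A Cc Y B D : Alg T,
  αb (⌊X⌋ ⊙ ⌊Y⌋) (⌊A⌋ ⊙ ⌊B⌋) (⌊Cc⌋ ⊙ ⌊D⌋) · (xi X A Y B ●' idm (⌊Cc⌋ ⊙ ⌊D⌋))
    · xi (AB X A) Cc (AB Y B) D
  = (idm (⌊X⌋ ⊙ ⌊Y⌋) ●' xi A Cc B D) · xi X (AB A Cc) Y (AB B D)
    · (αb ⌊X⌋ ⌊A⌋ ⌊Cc⌋ ⊙' αb ⌊Y⌋ ⌊B⌋ ⌊D⌋).

Lemma R_of_xi_assoc_bullet (x a c y b d : C) :
  αb (T x ⊙ T y) (T a ⊙ T b) (T c ⊙ T d)
    · (((mu T x ⊙' mu T y) ●' (mu T a ⊙' mu T b)) ●' idm (T c ⊙ T d))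
    · (R_of_xi xi (T x) (T a) (T y) (T b) ●' idm (T c ⊙ T d))
    · ((T2b x a ⊙' T2b y b) ●' idm (T c ⊙ T d))
    · R_of_xi xi (x ● a) c (y ● b) d
  = (idm (T x ⊙ T y) ●' ((mu T a ⊙' mu T b) ●' (mu T c ⊙' mu T d)))
    · (idm (T x ⊙ T y) ●' R_of_xi xi (T a) (T c) (T b) (T d))
    · (idm (T x ⊙ T y) ●' (T2b a c ⊙' T2b b d))
    · R_of_xi xi x (a ● c) y (b ● d) · (αb x a c ⊙' αb y b d).
Proof.
  pose proof (alg_hom_R_of_xi (T2_alg_hom Bb x a) (idm_alg_hom (F c))
                (T2_alg_hom Bb y b) (idm_alg_hom (F d))) as T2_left.
  simpl in T2_left; rewrite !(eta_T2 Bb), !comp_id_l in T2_left.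
  pose proof (alg_hom_R_of_xi (idm_alg_hom (F x)) (T2_alg_hom Bb a c)
                (idm_alg_hom (F y)) (T2_alg_hom Bb b d)) as T2_right.
  simpl in T2_right; rewrite !(eta_T2 Bb), !comp_id_l in T2_right.
  rewrite_lhs ltac:(rewrite <- (comp_assoc _ (tensm Mb (tensm Mb (tensm Mc (mu T x) _) _) _)),
    <- tens_comp, comp_id_l, R_of_xi_free, <- (tens_id Mc (T c) (T d)),
    <- (comp_assoc _ _ (R_of_xi xi (x ● a) _ _ _)); simpl; rewrite T2_left;
    rewrite tens_id, comp_assoc;
    rewrite_simpl (xi_assoc_bullet (F x) (F a) (F c) (F y) (F b) (F d));
    rewrite <- (comp_assoc _ (tensm Mc (αb _ _ _) _)), <- tens_comp, !assoc_nat, tens_comp,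
      comp_assoc).
  rewrite_rhs ltac:(rewrite <- tens_comp, comp_id_l, R_of_xi_free, <- (tens_id Mc (T x) (T y)),
    <- (comp_assoc _ _ (R_of_xi xi x (a ● c) _ _)); simpl; rewrite T2_right, comp_assoc, tens_id).
  reflexivity.
Qed.

End FromInterchange.

Lemma duoidal_lift_xi_of_R (R : RType Mc Mb T) nu varpi iota :
  is_Rmatrix Bc Bb R nu varpi iota -> is_duoidal_lift Bc Bb (xi_of_R R) nu varpi iota.
Proof.
  intros (R_nat & homs & monoid & unit_circ_l & unit_circ_r & unit_bullet_l & unit_bullet_r
    & lift & assoc_circ & assoc_bullet).
  refine (conj _ (conj _ (conj homs (conj monoid (conj _ (conj _ (conj _ (conj _ (conj _ _))))))))).
  - intros until 4. apply xi_of_R_natural; assumption.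
  - apply xi_of_R_alg_hom; assumption.
  - apply xi_of_R_assoc_circ; assumption.
  - apply xi_of_R_assoc_bullet; assumption.
  - exact unit_circ_l.
  - exact unit_circ_r.
  - intros A B. unfold xi_of_R. rewrite comp_assoc. apply unit_bullet_l.
  - intros A B. unfold xi_of_R. rewrite comp_assoc. apply unit_bullet_r.
Qed.

Lemma Rmatrix_R_of_xi (xi : XiType Mc Mb T) nu varpi iota :
  is_duoidal_lift Bc Bb xi nu varpi iota -> is_Rmatrix Bc Bb (R_of_xi xi) nu varpi iota.
Proof.
  intros (xi_nat & xi_hom & homs & monoid & assoc_circ & assoc_bullet
    & unit_circ_l & unit_circ_r & unit_bullet_l & unit_bullet_r).
  refine (conj _ (conj homs (conj monoid (conj _ (conj _ (conj _ (conj _ (conj _ (conj _ _))))))))).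
  - apply R_of_xi_natural; assumption.
  - intros A B. rewrite <- unit_circ_l. f_equal.
    exact (xi_of_R_of_xi xi xi_nat (alg_unit Bc) (alg_unit Bc) A B).
  - intros A B. rewrite <- unit_circ_r. f_equal.
    exact (xi_of_R_of_xi xi xi_nat A B (alg_unit Bc) (alg_unit Bc)).
  - intros A B. rewrite <- unit_bullet_l, <- comp_assoc. f_equal.
    exact (xi_of_R_of_xi xi xi_nat (alg_unit Bb) A (alg_unit Bb) B).
  - intros A B. rewrite <- unit_bullet_r, <- comp_assoc. f_equal.
    exact (xi_of_R_of_xi xi xi_nat A (alg_unit Bb) B (alg_unit Bb)).
  - apply R_of_xi_lift; assumption.
  - apply R_of_xi_assoc_circ; assumption.
  - apply R_of_xi_assoc_bullet; assumption.
Qed.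

End Correspondence.

Theorem mainTheorem1 (C : Category) (Mc Mb : Monoidal C) (T : Monad C)
  (Bc : Bimonad Mc T) (Bb : Bimonad Mb T) :
  (forall (R : RType Mc Mb T) (nu : hom (munit Mc) (tens Mb (munit Mc) (munit Mc)))
          (varpi : hom (tens Mc (munit Mb) (munit Mb)) (munit Mb))
          (iota : hom (munit Mc) (munit Mb)),
      is_Rmatrix Bc Bb R nu varpi iota ->
      is_duoidal_lift Bc Bb (xi_of_R R) nu varpi iota
      /\ (forall a b c d : C, R_of_xi (xi_of_R R) a b c d = R a b c d))
  /\
  (forall (xi : XiType Mc Mb T) (nu : hom (munit Mc) (tens Mb (munit Mc) (munit Mc)))
          (varpi : hom (tens Mc (munit Mb) (munit Mb)) (munit Mb))
          (iota : hom (munit Mc) (munit Mb)),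
      is_duoidal_lift Bc Bb xi nu varpi iota ->
      is_Rmatrix Bc Bb (R_of_xi xi) nu varpi iota
      /\ (forall A B Cc D : Alg T, xi_of_R (R_of_xi xi) A B Cc D = xi A B Cc D)).
Proof.
  split.
  - intros R nu varpi iota HR. split.
    + apply duoidal_lift_xi_of_R, HR.
    + apply R_of_xi_of_R, HR.
  - intros xi nu varpi iota Hxi. split.
    + apply Rmatrix_R_of_xi, Hxi.
    + apply xi_of_R_of_xi, Hxi.
Qed.
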